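(* Let $G$ and $H$ be graphs with $i_G$ and $i_H$ isolated vertices, respectively. Then $$\rho(G\times H)\geq\max\{\rho_o(G^-)\rho(H^-),\ \rho_o(H^-)\rho(G^-)\}+i_G|V(H)|+i_H|V(G)|-i_Gi_H.$$
   Context: All graphs are finite and simple. $G^-$ denotes the graph obtained from $G$ by deleting all isolated vertices. A packing of $G$ is a set $P\subseteq V(G)$ with $N[u]\cap N[v]=\emptyset$ for all distinct $u,v\in P$ ($N[\cdot]$ the closed neighborhood); $\rho(G)$ is the maximum size of a packing. An open packing is a set whose vertices have pairwise disjoint open neighborhoods; $\rho_o(G)$ is its maximum size. The direct product $G\times H$ has vertex set $V(G)\times V(H)$, with $(g,h)$ adjacent to $(g',h')$ iff $gg'\in E(G)$ and $hh'\in E(H)$. *)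

From mathcomp Require Import all_boot.
Set Implicit Arguments. Unset Strict Implicit. Unset Printing Implicit Defensive.

Definition simple_graph (T : finType) (e : rel T) : Prop := symmetric e /\ irreflexive e.

Definition cnbhd (T : finType) (e : rel T) (x : T) : {set T} := [set y | (y == x) || e x y].
Definition onbhd (T : finType) (e : rel T) (x : T) : {set T} := [set y | e x y].

Definition packing (T : finType) (e : rel T) (P : {set T}) : bool :=
  [forall u in P, forall v in P, (u != v) ==> [disjoint cnbhd e u & cnbhd e v]].
Definition open_packing (T : finType) (e : rel T) (P : {set T}) : bool :=
  [forall u in P, forall v in P, (u != v) ==> [disjoint onbhd e u & onbhd e v]].

Definition rho (T : finType) (e : rel T) : nat := \max_(P : {set T} | packing e P) #|P|.
Definition rho_o (T : finType) (e : rel T) : nat := \max_(P : {set T} | open_packing e P) #|P|.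

Definition isolated (T : finType) (e : rel T) (x : T) : bool := [forall y, ~~ e x y].
Definition niso (T : finType) (e : rel T) : nat := #|[set x | isolated e x]|.

(* G^- : the induced subgraph on the non-isolated vertices *)
Definition nonisoT (T : finType) (e : rel T) : finType := {x : T | ~~ isolated e x}.
Definition noniso_rel (T : finType) (e : rel T) : rel (nonisoT e) :=
  fun x y => e (val x) (val y).

Definition dprod_rel (T1 T2 : finType) (e1 : rel T1) (e2 : rel T2) : rel (T1 * T2)%type :=
  fun x y => e1 x.1 y.1 && e2 x.2 y.2.
Arguments noniso_rel {T} e _ _.
Arguments nonisoT {T} e.

(* If A is an open packing of G^- and B one of H^-, and one of them is even a
   packing, then A x B is a packing of G x H: two distinct pairs with a common
   closed neighbour would either be adjacent (impossible, as one factor set is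
   independent) or would have a common open neighbour in a coordinate where
   they differ.  All of A x B is non-isolated, and adding the isolated vertices
   of G x H, namely the pairs with an isolated coordinate, keeps a packing.
   Counting those pairs by inclusion-exclusion gives the bound. *)
From mathcomp Require Import all_boot.
Set Implicit Arguments. Unset Strict Implicit. Unset Printing Implicit Defensive.

Section Packings.

Variables (T : finType) (e : rel T).

Lemma packingP (P : {set T}) :
  reflect {in P &, forall u v, u != v -> [disjoint cnbhd e u & cnbhd e v]}
          (packing e P).
Proof.
apply: (iffP forall_inP) => [pP u v uP vP | pP u uP].
  by move/forall_inP/(_ v vP)/implyP: (pP u uP).
by apply/forall_inP => v vP; apply/implyP; apply: pP.
Qed.

Lemma open_packingP (P : {set T}) :
  reflect {in P &, forall u v, u != v -> [disjoint onbhd e u & onbhd e v]}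
          (open_packing e P).
Proof.
apply: (iffP forall_inP) => [pP u v uP vP | pP u uP].
  by move/forall_inP/(_ v vP)/implyP: (pP u uP).
by apply/forall_inP => v vP; apply/implyP; apply: pP.
Qed.

Lemma onbhd_sub_cnbhd x : onbhd e x \subset cnbhd e x.
Proof. by apply/subsetP => y; rewrite !inE orbC => ->. Qed.

Lemma packing_open_packing P : packing e P -> open_packing e P.
Proof.
move/packingP => pP; apply/open_packingP => u v uP vP uv.
by apply: disjointWl (onbhd_sub_cnbhd u) (disjointWr (onbhd_sub_cnbhd v) _); apply: pP.
Qed.

Lemma packing_independent P :
  irreflexive e -> packing e P -> {in P &, forall u v, ~~ e u v}.
Proof.
move=> irr /packingP pP u v uP vP; have [<-|uv] := eqVneq u v; first by rewrite irr.
apply/negP => euv; have vNu : v \in cnbhd e u by rewrite inE euv orbT.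
by move: (disjointFr (pP u v uP vP uv) vNu); rewrite inE eqxx.
Qed.

Lemma cnbhd_isolated x : isolated e x -> cnbhd e x = [set x].
Proof.
move/forallP => isox; apply/setP => y; rewrite !inE.
by case: eqP => //= _; apply/negbTE.
Qed.

Lemma packingU_isolated P :
  symmetric e -> packing e P -> packing e (P :|: [set x | isolated e x]).
Proof.
move=> sym /packingP pP.
have isolated_apart u v : isolated e u -> u != v -> [disjoint cnbhd e u & cnbhd e v].
  move=> isou uv; rewrite cnbhd_isolated // disjoints1 !inE negb_or uv sym.
  exact: (forallP isou v).
apply/packingP => u v; rewrite !inE => /orP[uP | isou] /orP[vP | isov] uv.
- exact: pP.
- by rewrite disjoint_sym; apply: isolated_apart; rewrite // eq_sym.
- exact: isolated_apart.
- exact: isolated_apart.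
Qed.

Lemma packing_card_le_rho P : packing e P -> #|P| <= rho e.
Proof. exact: leq_bigmax_cond. Qed.

Lemma rho_witness : exists2 P, packing e P & #|P| = rho e.
Proof.
have [|P pP maxP] := @eq_bigmax_cond _ (packing e) (fun P => #|P|).
  by apply/card_gt0P; exists set0; apply/packingP => u; rewrite inE.
by exists P => //; exact: esym maxP.
Qed.

Lemma rho_o_witness : exists2 P, open_packing e P & #|P| = rho_o e.
Proof.
have [|P pP maxP] := @eq_bigmax_cond _ (open_packing e) (fun P => #|P|).
  by apply/card_gt0P; exists set0; apply/open_packingP => u; rewrite inE.
by exists P => //; exact: esym maxP.
Qed.

End Packings.

Section NonIsolatedPart.

Variables (T : finType) (e : rel T).
Hypothesis sym : symmetric e.

Lemma adj_noniso x y : e x y -> ~~ isolated e y.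
Proof. by move=> exy; apply/forallPn; exists x; rewrite negbK sym. Qed.

Lemma onbhd_val (x : nonisoT e) : onbhd e (val x) = val @: onbhd (noniso_rel e) x.
Proof.
apply/setP => z; apply/idP/imsetP => [| [y + ->]]; last by rewrite !inE.
by rewrite inE => exz; exists (exist _ z (adj_noniso exz)); rewrite ?inE.
Qed.

Lemma cnbhd_val (x : nonisoT e) : cnbhd e (val x) = val @: cnbhd (noniso_rel e) x.
Proof.
apply/setP => z; apply/idP/imsetP => [|[y + ->]]; last by rewrite !inE.
rewrite inE => /orP[/eqP -> | exz]; first by exists x; rewrite ?inE ?eqxx.
by exists (exist _ z (adj_noniso exz)); rewrite // !inE /noniso_rel /= exz orbT.
Qed.

Lemma packing_val (P : {set nonisoT e}) :
  packing (noniso_rel e) P -> packing e (val @: P).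
Proof.
move/packingP => pP; apply/packingP => _ _ /imsetP[u uP ->] /imsetP[v vP ->] uv.
rewrite !cnbhd_val imset_disjoint; last exact: val_inj.
by apply: pP => //; apply: contraNneq uv => ->.
Qed.

Lemma open_packing_val (P : {set nonisoT e}) :
  open_packing (noniso_rel e) P -> open_packing e (val @: P).
Proof.
move/open_packingP => pP; apply/open_packingP => _ _ /imsetP[u uP ->] /imsetP[v vP ->] uv.
rewrite !onbhd_val imset_disjoint; last exact: val_inj.
by apply: pP => //; apply: contraNneq uv => ->.
Qed.

Lemma noniso_rho_o_witness :
  exists2 A : {set T}, open_packing e A & {in A, forall x, ~~ isolated e x} /\
                                         #|A| = rho_o (noniso_rel e).
Proof.
have [P opP <-] := rho_o_witness (noniso_rel e).
exists (val @: P); first exact: open_packing_val.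
by split; [move=> _ /imsetP[x _ ->]; exact: (valP x) | exact: card_imset val_inj].
Qed.

Lemma noniso_rho_witness :
  exists2 A : {set T}, packing e A & {in A, forall x, ~~ isolated e x} /\
                                    #|A| = rho (noniso_rel e).
Proof.
have [P pP <-] := rho_witness (noniso_rel e).
exists (val @: P); first exact: packing_val.
by split; [move=> _ /imsetP[x _ ->]; exact: (valP x) | exact: card_imset val_inj].
Qed.

End NonIsolatedPart.

Section DirectProduct.

Variables (T1 T2 : finType) (e1 : rel T1) (e2 : rel T2).

Lemma dprod_symmetric :
  symmetric e1 -> symmetric e2 -> symmetric (dprod_rel e1 e2).
Proof. by move=> sym1 sym2 x y; rewrite /dprod_rel sym1 sym2. Qed.

Lemma isolated_dprod p :
  isolated (dprod_rel e1 e2) p = isolated e1 p.1 || isolated e2 p.2.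
Proof.
apply/forallP/idP => [isop | /orP[/forallP iso1 | /forallP iso2] q].
- apply: contraT; rewrite negb_or => /andP[/forallPn[x /negbNE ex] /forallPn[y /negbNE ey]].
  by move: (isop (x, y)); rewrite /dprod_rel /= ex ey.
- by rewrite /dprod_rel negb_and iso1.
- by rewrite /dprod_rel negb_and iso2 orbT.
Qed.

Lemma niso_dprod :
  niso (dprod_rel e1 e2) = niso e1 * #|T2| + niso e2 * #|T1| - niso e1 * niso e2.
Proof.
rewrite /niso; set I1 := [set x | isolated e1 x]; set I2 := [set y | isolated e2 y].
have -> : [set p | isolated (dprod_rel e1 e2) p] = setX I1 setT :|: setX setT I2.
  by apply/setP => -[x y]; rewrite !inE isolated_dprod andbT.
have I1I2 : setX I1 [set: T2] :&: setX [set: T1] I2 = setX I1 I2.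
  by apply/setP => -[x y]; rewrite !inE andbT.
have := cardsUI (setX I1 [set: T2]) (setX [set: T1] I2).
by rewrite I1I2 !cardsX !cardsT [#|T1| * _]mulnC => <-; rewrite addnK.
Qed.

Lemma packing_setX (A : {set T1}) (B : {set T2}) :
  irreflexive e1 -> irreflexive e2 ->
  open_packing e1 A -> open_packing e2 B -> packing e1 A || packing e2 B ->
  packing (dprod_rel e1 e2) (setX A B).
Proof.
move=> irr1 irr2 /open_packingP opA /open_packingP opB packAB.
have nonadj a a' b b' : a \in A -> a' \in A -> b \in B -> b' \in B ->
    e1 a a' -> e2 b b' -> False.
  move=> aA a'A bB b'B; case/orP: packAB => [/packing_independent pA | /packing_independent pB].
  - by rewrite (negbTE (pA irr1 a a' aA a'A)).
  - by rewrite (negbTE (pB irr2 b b' bB b'B)).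
apply/packingP => -[a1 b1] [a2 b2] /setXP[a1A b1B] /setXP[a2A b2B] uv.
apply/pred0P => z /=; apply/negbTE/andP; rewrite !inE /dprod_rel /=.
case=> /orP[/eqP-> | /andP[e1z e2z]] /orP[/eqP zv | /andP[f1z f2z]].
- by rewrite zv eqxx in uv.
- exact: nonadj a2A a1A b2B b1B f1z f2z.
- by move: zv e1z e2z => -> /=; apply: nonadj.
have [a12 | a1a2] := eqVneq a1 a2.
  have b1b2 : b1 != b2 by apply: contraNneq uv => <-; rewrite a12.
  have zb1 : z.2 \in onbhd e2 b1 by rewrite inE.
  by move: (disjointFr (opB b1 b2 b1B b2B b1b2) zb1); rewrite inE f2z.
have za1 : z.1 \in onbhd e1 a1 by rewrite inE.
by move: (disjointFr (opA a1 a2 a1A a2A a1a2) za1); rewrite inE f1z.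
Qed.

Lemma rho_dprod_ge (A : {set T1}) (B : {set T2}) :
  simple_graph e1 -> simple_graph e2 ->
  open_packing e1 A -> open_packing e2 B -> packing e1 A || packing e2 B ->
  {in A, forall x, ~~ isolated e1 x} -> {in B, forall y, ~~ isolated e2 y} ->
  #|A| * #|B| + niso (dprod_rel e1 e2) <= rho (dprod_rel e1 e2).
Proof.
move=> [sym1 irr1] [sym2 irr2] opA opB packAB nisoA nisoB.
have disjAB : [disjoint setX A B & [set p | isolated (dprod_rel e1 e2) p]].
  apply/pred0P => -[x y] /=; rewrite !inE isolated_dprod /=.
  by apply/negbTE/andP => -[/andP[/nisoA/negbTE-> /nisoB/negbTE->]].
have := (leq_card_setU (setX A B) [set p | isolated (dprod_rel e1 e2) p]).2.
rewrite disjAB => /eqP cardU.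
rewrite /niso -cardsX -cardU.
apply/packing_card_le_rho/packingU_isolated; first exact: dprod_symmetric.
exact: packing_setX.
Qed.

End DirectProduct.

Theorem mainTheorem12 (T1 T2 : finType) (e1 : rel T1) (e2 : rel T2) :
  simple_graph e1 -> simple_graph e2 ->
  maxn (rho_o (noniso_rel e1) * rho (noniso_rel e2))
       (rho_o (noniso_rel e2) * rho (noniso_rel e1))
  + niso e1 * #|T2| + niso e2 * #|T1| - niso e1 * niso e2
  <= rho (dprod_rel e1 e2).
Proof.
move=> G1 G2; have [sym1 _] := G1; have [sym2 _] := G2.
have [O1 opO1 [nisoO1 <-]] := noniso_rho_o_witness sym1.
have [O2 opO2 [nisoO2 <-]] := noniso_rho_o_witness sym2.
have [P1 pP1 [nisoP1 <-]] := noniso_rho_witness sym1.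
have [P2 pP2 [nisoP2 <-]] := noniso_rho_witness sym2.
have isolated_pairs : niso e1 * niso e2 <= niso e1 * #|T2| + niso e2 * #|T1|.
  by apply: leq_trans (leq_addr _ _); rewrite leq_mul2l max_card orbT.
rewrite -addnA -addnBA // -niso_dprod addn_maxl geq_max.
apply/andP; split.
- by apply: rho_dprod_ge; rewrite ?pP2 ?orbT // (packing_open_packing pP2).
- by rewrite mulnC; apply: rho_dprod_ge; rewrite ?pP1 // (packing_open_packing pP1).
Qed.
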